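(* Let $\kappa$ be a regular uncountable cardinal and $I$ an ideal on $\kappa$ with $NS_\kappa\subseteq I$. If $I$ is quasinormal, then $I$ is pleasant, and therefore $I$ is normal.
   Context: An ideal on $\kappa$ is a family of subsets of $\kappa$ closed under subsets and finite unions, which is $<\kappa$-complete and contains all singletons. $NS_\kappa$ is the ideal of nonstationary subsets of $\kappa$ (sets disjoint from some closed unbounded subset of $\kappa$). $I^*=\{\kappa\setminus X: X\in I\}$. For $A\subseteq\kappa$ and $X_\alpha\subseteq\kappa$, $\bigtriangledown_{\alpha\in A}X_\alpha=\{\xi<\kappa:\exists\alpha<\xi\,(\alpha\in A\wedge \xi\in X_\alpha)\}$. $I$ is normal if $X_\alpha\in I$ for all $\alpha<\kappa$ implies $\bigtriangledown_{\alpha<\kappa}X_\alpha\in I$. $I$ is pleasant if whenever $A\in I$ and $X_\alpha\in I$ for all $\alpha$, then $\bigtriangledown_{\alpha\in A}X_\alpha\in I$. $I$ is quasinormal if for every sequence $\langle X_\alpha\rangle_{\alpha<\kappa}$ of members of $I$ there is $Q\in I^*$ with $\bigtriangledown_{\alpha\in Q}X_\alpha\in I$. *)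

(* a cardinal kappa is modelled as a type T with a strict
   well-order lt (the ordinals < kappa), where T is an initial ordinal. *)
From Stdlib Require Import Classical.

Set Implicit Arguments.

(* |B| < |A|  (cardinality of B strictly less than that of A):
   there is no injection from A into B. *)
Definition card_lt (A B : Type) : Prop :=
  ~ exists f : A -> B, forall x y, f x = f y -> x = y.

Definition strict_well_order (T : Type) (lt : T -> T -> Prop) : Prop :=
  (forall x, ~ lt x x) /\
  (forall x y z, lt x y -> lt y z -> lt x z) /\
  (forall x y, lt x y \/ x = y \/ lt y x) /\
  well_founded lt.

Definition regular_uncountable_cardinal (T : Type) (lt : T -> T -> Prop) : Prop :=
  strict_well_order lt /\
  (* kappa is a cardinal: every proper initial segment has smaller size *)
  (forall a : T, card_lt T {b : T | lt b a}) /\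
  card_lt T nat /\
  (* regular: every subset of size < kappa is bounded *)
  (forall X : T -> Prop, card_lt T {x : T | X x} ->
     exists a, forall x, X x -> lt x a).

Section Ideals.
Variables (T : Type) (lt : T -> T -> Prop).

Definition subset_of (X Y : T -> Prop) : Prop := forall x, X x -> Y x.

Definition is_ideal (I : (T -> Prop) -> Prop) : Prop :=
  (forall X Y, I Y -> subset_of X Y -> I X) /\
  (forall X Y, I X -> I Y -> I (fun x => X x \/ Y x)) /\
  (forall (J : Type) (F : J -> T -> Prop), card_lt T J ->
     (forall j, I (F j)) -> I (fun x => exists j, F j x)) /\
  (forall a : T, I (fun x => x = a)).

Definition closed_set (C : T -> Prop) : Prop :=
  forall a, (exists g, lt g a) ->
    (forall g, lt g a -> exists c, C c /\ lt g c /\ lt c a) -> C a.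

Definition unbounded_set (C : T -> Prop) : Prop :=
  forall g, exists c, C c /\ lt g c.

Definition club (C : T -> Prop) : Prop := closed_set C /\ unbounded_set C.

Definition nonstationary (X : T -> Prop) : Prop :=
  exists C, club C /\ forall x, C x -> ~ X x.

Definition dual_filter (I : (T -> Prop) -> Prop) (Q : T -> Prop) : Prop :=
  I (fun x => ~ Q x).

Definition diag_union (A : T -> Prop) (X : T -> T -> Prop) : T -> Prop :=
  fun xi => exists a, lt a xi /\ A a /\ X a xi.

Definition normal_ideal (I : (T -> Prop) -> Prop) : Prop :=
  forall X : T -> T -> Prop, (forall a, I (X a)) ->
    I (diag_union (fun _ => True) X).

Definition pleasant_ideal (I : (T -> Prop) -> Prop) : Prop :=
  forall (A : T -> Prop) (X : T -> T -> Prop), I A -> (forall a, I (X a)) ->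
    I (diag_union A X).

Definition quasinormal_ideal (I : (T -> Prop) -> Prop) : Prop :=
  forall X : T -> T -> Prop, (forall a, I (X a)) ->
    exists Q, dual_filter I Q /\ I (diag_union Q X).

End Ideals.

(* Quasinormality together with NS_kappa in I already gives normality, and a normal ideal is
   pleasant because a diagonal union over [A] is contained in the one over all of kappa.
   Given [X_a] in [I], the unions [Z_b] of the [X_a] with [a < b] lie in [I]; quasinormality
   gives [Q] in [I^*] with the diagonal union of the [Z_b] over [Q] in [I].  Since [I] contains
   the bounded sets, [Q] is unbounded, so its limit points form a club [D].  If [a < xi] with
   [xi] in [D], pick [b] in [Q] with [a < b < xi]; then [xi] is in [Z_b].  So the diagonal union
   of the [X_a] lies in that of the [Z_b] over [Q] together with the complement of [D]. *)
From Stdlib Require Import Classical ClassicalEpsilon ProofIrrelevance.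

Set Implicit Arguments.

Lemma card_lt_of_inj (A B C : Type) :
  card_lt A C -> (exists g : B -> C, forall x y, g x = g y -> x = y) -> card_lt A B.
Proof.
  intros hAC [g hg] [h hh]. apply hAC.
  exists (fun a => g (h a)). intros x y e. apply hh, hg, e.
Qed.

Lemma nat_range_inj (T : Type) (f : nat -> T) :
  exists g : {x | exists n, x = f n} -> nat, forall r s, g r = g s -> r = s.
Proof.
  exists (fun r : {x | exists n, x = f n} =>
    proj1_sig (constructive_indefinite_description (fun n => proj1_sig r = f n) (proj2_sig r))).
  intros [x px] [y py]; simpl.
  destruct (constructive_indefinite_description _ px) as [n ex].
  destruct (constructive_indefinite_description _ py) as [m ey]; simpl.
  intros <-. subst x y. f_equal. apply proof_irrelevance.
Qed.

Section Ideals.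
Variables (T : Type) (lt : T -> T -> Prop).

Lemma wf_min (wf : well_founded lt) (P : T -> Prop) :
  (exists x, P x) -> exists m, P m /\ forall y, lt y m -> ~ P y.
Proof.
  intros [x Px]. apply NNPP. intros H.
  revert Px. pattern x. apply (well_founded_ind wf).
  intros z IH Pz. apply H. exists z. split; auto.
Qed.

Lemma card_lt_nat_range (hnat : card_lt T nat) (f : nat -> T) :
  card_lt T {x | exists n, x = f n}.
Proof. exact (card_lt_of_inj hnat (nat_range_inj f)). Qed.

Definition limit_points (Q : T -> Prop) : T -> Prop :=
  fun xi => forall a, lt a xi -> exists b, Q b /\ lt a b /\ lt b xi.

Lemma limit_points_closed (trans : forall x y z, lt x y -> lt y z -> lt x z)
  (Q : T -> Prop) : closed_set lt (limit_points Q).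
Proof.
  intros a _ H g hg. destruct (H g hg) as [c [Dc [hgc hca]]].
  destruct (Dc g hgc) as [b [Qb [hgb hbc]]].
  exists b. repeat split; eauto.
Qed.

Lemma limit_points_unbounded (hk : regular_uncountable_cardinal lt) (Q : T -> Prop) :
  unbounded_set lt Q -> unbounded_set lt (limit_points Q).
Proof.
  destruct hk as [[_ [trans [tri wf]]] [_ [hnat hreg]]].
  intros hQ g.
  pose (next := fun t => proj1_sig (constructive_indefinite_description _ (hQ t))).
  assert (next_spec : forall t, Q (next t) /\ lt t (next t)).
  { intro t. unfold next. destruct (constructive_indefinite_description _ (hQ t)); auto. }
  (* The least bound of an omega-sequence climbing through [Q] is a limit point of [Q]. *)
  pose (q := fun n => Nat.iter n next (next g)).
  assert (bounded : exists a, forall n, lt (q n) a).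
  { destruct (hreg _ (card_lt_nat_range hnat q)) as [a Ha].
    exists a. intro n. apply Ha. exists n. reflexivity. }
  destruct (wf_min wf _ bounded) as [m [ub least]].
  exists m. split.
  - intros a ham.
    destruct (not_all_ex_not _ _ (least a ham)) as [n hn].
    exists (q (S n)). destruct (next_spec (q n)) as [Qn hn'].
    split; [exact Qn|]. split; [|apply ub].
    destruct (tri a (q n)) as [h|[h|h]]; [eauto| subst; exact hn'| contradiction].
  - exact (trans _ _ _ (proj2 (next_spec g)) (ub 0)).
Qed.

Section Ideal.
Variables (I : (T -> Prop) -> Prop).
Hypothesis hI : is_ideal I.

Lemma ideal_union_below (X : T -> T -> Prop) (b : T) :
  card_lt T {a | lt a b} -> (forall a, I (X a)) -> I (fun x => exists a, lt a b /\ X a x).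
Proof.
  destruct hI as [hsub [_ [hcomp _]]]. intros hb hX.
  apply (hsub _ _ (hcomp _ (fun j x => X (proj1_sig j) x) hb (fun j => hX (proj1_sig j)))).
  intros x [a [hab Xa]]. exists (exist _ a hab). exact Xa.
Qed.

Lemma ideal_initial_segment (b : T) :
  card_lt T {a | lt a b} -> I (fun x => lt x b).
Proof.
  intro hb. destruct hI as [hsub [_ [_ hsing]]].
  apply (hsub _ _ (ideal_union_below (fun a x => x = a) hb hsing)).
  intros x hx. exists x. auto.
Qed.

Lemma unbounded_of_dual_filter (tri : forall x y, lt x y \/ x = y \/ lt y x)
  (hcard : forall a, card_lt T {b | lt b a}) (Q : T -> Prop) :
  ~ I (fun _ => True) -> dual_filter I Q -> unbounded_set lt Q.
Proof.
  destruct hI as [hsub [hun [_ hsing]]]. intros proper HQ g.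
  apply NNPP. intro hg. apply proper.
  apply (hsub _ _ (hun _ _ (hun _ _ (ideal_initial_segment (hcard g)) (hsing g)) HQ)).
  intros x _. destruct (classic (Q x)) as [Qx|Qx]; [left|right; exact Qx].
  destruct (tri x g) as [h|[h|h]]; auto.
  exfalso. apply hg. exists x. auto.
Qed.

Lemma normal_of_quasinormal (hk : regular_uncountable_cardinal lt) :
  (forall X, nonstationary lt X -> I X) -> quasinormal_ideal lt I -> normal_ideal lt I.
Proof.
  intros hNS hq X hX. pose proof hI as [hsub [hun _]].
  destruct (classic (I (fun _ => True))) as [full|proper].
  { apply (hsub _ _ full). now intros. }
  pose proof hk as [[_ [trans [tri _]]] [hcard _]].
  pose (Z := fun b x => exists a, lt a b /\ X a x).
  destruct (hq Z (fun b => ideal_union_below X (hcard b) hX)) as [Q [HQ HZ]].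
  assert (HD : I (fun x => ~ limit_points Q x)).
  { apply hNS. exists (limit_points Q). split; [split|].
    - apply limit_points_closed, trans.
    - apply limit_points_unbounded, unbounded_of_dual_filter; assumption.
    - auto. }
  apply (hsub _ _ (hun _ _ HZ HD)).
  intros xi [a [haxi [_ Xa]]].
  destruct (classic (limit_points Q xi)) as [Dxi|]; [left|right; assumption].
  destruct (Dxi a haxi) as [b [Qb [hab hbxi]]].
  exists b. repeat split; [assumption..|]. exists a. auto.
Qed.

Lemma pleasant_of_normal : normal_ideal lt I -> pleasant_ideal lt I.
Proof.
  intros hn A X _ hX. destruct hI as [hsub _].
  apply (hsub _ _ (hn X hX)). intros xi [a [h [_ Xa]]]. exists a. auto.
Qed.

End Ideal.
End Ideals.

Theorem theorem3p5 (T : Type) (lt : T -> T -> Prop)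
  (hk : regular_uncountable_cardinal lt)
  (I : (T -> Prop) -> Prop) (hI : is_ideal I)
  (hNS : forall X : T -> Prop, nonstationary lt X -> I X)
  (hq : quasinormal_ideal lt I) :
  pleasant_ideal lt I /\ normal_ideal lt I.
Proof.
  assert (hn : normal_ideal lt I) by exact (normal_of_quasinormal hI hk hNS hq).
  split; [exact (pleasant_of_normal hI hn) | exact hn].
Qed.
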